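(* Fix $T>0$, a closed non-trivial rectangle $I\times J\subset(0,T]\times\mathbb R^k$ and an integer $d\ge1$. For all $N>0$, $b>0$, $\tilde\gamma>\gamma>0$ and $p>\frac{2d}{\gamma}(\tilde\gamma b-2k-4)$, there is a finite constant $C=C(I,J,N,b,\gamma,\tilde\gamma,p)>0$ such that for all $a\in[0,N]$, $$\int_Idt\int_Ids\int_Jdx\int_Jdy\,\big(|t-s|^{\tilde\gamma/2}+\|x-y\|^{\tilde\gamma}\big)^{-b/2}\Big(\frac{|t-s|^{\gamma/4}+\|x-y\|^{\gamma/2}}{a}\wedge1\Big)^{p/(2d)}\le C\,K_{\frac{\tilde\gamma}{\gamma}b-\frac{4+2k}{\gamma}}(a),$$ provided the constant $N_0$ in the definition of $K_0$ is sufficiently large.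
   Context: For $\alpha\in\mathbb R$ and $r>0$: $K_\alpha(r)=r^{-\alpha}$ if $\alpha>0$; $K_0(r)=\log(N_0/r)$ for a constant $N_0$; $K_\alpha(r)=1$ if $\alpha<0$ (with $K_\alpha(0)=+\infty$ for $\alpha\ge0$). A closed non-trivial rectangle is $I\times J$ with $I\subset(0,T]$ a closed non-degenerate interval and $J=\prod_{i=1}^k[a_i,b_i]$, $a_i<b_i$. Norms are Euclidean. *)

From Stdlib Require Import Reals Lra List.
Open Scope R_scope.

Fixpoint rsum (n : nat) (f : nat -> R) : R :=
  match n with O => 0 | S n' => rsum n' f + f n' end.
Fixpoint rprod (n : nat) (f : nat -> R) : R :=
  match n with O => 1 | S n' => rprod n' f * f n' end.

(* points of R^m are functions nat -> R, only coordinates < m matter *)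
Definition in_box (m : nat) (lo hi z : nat -> R) : Prop :=
  forall i, (i < m)%nat -> lo i <= z i <= hi i.

Definition box_vol (m : nat) (lo hi : nat -> R) : R :=
  rprod m (fun i => hi i - lo i).

(* A nonnegative step function below f on the box [lo,hi]:
   a finite list of (value, lower corner, upper corner) of closed boxes
   contained in [lo,hi] with pairwise disjoint interiors. *)
Definition admissible_step (m : nat) (lo hi : nat -> R) (f : (nat -> R) -> R)
    (l : list (R * (nat -> R) * (nat -> R))) : Prop :=
  Forall (fun '(c, a, b) =>
            0 <= c /\
            (forall i, (i < m)%nat -> lo i <= a i /\ a i <= b i /\ b i <= hi i) /\
            (forall z, in_box m a b z -> c <= f z)) l /\
  ForallOrdPairs (fun '(_, a, b) '(_, a', b') =>
            exists i, (i < m)%nat /\ (b i <= a' i \/ b' i <= a i)) l.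

Definition step_sum (m : nat) (l : list (R * (nat -> R) * (nat -> R))) : R :=
  fold_right (fun '(c, a, b) acc => c * box_vol m a b + acc) 0 l.

(* "∫_{[lo,hi]} f <= M" for a nonnegative (lower semicontinuous off a null
   set) integrand f: the Lebesgue integral equals the supremum of the
   integrals of the step functions below f. *)
Definition integral_le (m : nat) (lo hi : nat -> R) (f : (nat -> R) -> R) (M : R) : Prop :=
  forall l, admissible_step m lo hi f l -> step_sum m l <= M.

(* x^y for x >= 0, with 0^y := 0 (used only with bases that are > 0 off a null set) *)
Definition pw (x y : R) : R := if Rlt_dec 0 x then Rpower x y else 0.

Definition dist_k (k : nat) (x y : nat -> R) : R :=
  sqrt (rsum k (fun i => (x i - y i) ^ 2)).

(* (r / a) ∧ 1, with r/0 = +∞ for r > 0 *)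
Definition capmin (r a : R) : R :=
  if Req_EM_T a 0 then 1 else Rmin (r / a) 1.

(* Integrand on R^(2+2k): z 0 = t, z 1 = s, z (2+i) = x_i, z (2+k+i) = y_i.
   Set to 0 on the (null) diagonal t = s, x = y. *)
Definition integrand (k d : nat) (b gamma gammat p a : R) (z : nat -> R) : R :=
  let e := Rabs (z 0%nat - z 1%nat) in
  let r := dist_k k (fun i => z (2 + i)%nat) (fun i => z (2 + k + i)%nat) in
  if Rlt_dec 0 (e + r) then
    Rpower (pw e (gammat / 2) + pw r gammat) (- b / 2) *
    pw (capmin (pw e (gamma / 4) + pw r (gamma / 2)) a) (p / (2 * INR d))
  else 0.

(* corners of I × I × J × J in R^(2+2k), I = [t0,t1], J = prod [aJ i, bJ i] *)
Definition corner (k : nat) (t0 : R) (aJ : nat -> R) (j : nat) : R :=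
  if Nat.ltb j 2 then t0
  else if Nat.ltb j (2 + k) then aJ (j - 2)%nat else aJ (j - 2 - k)%nat.

(* K_alpha(r), for the values where it is finite *)
Definition Kfun (alpha N0 r : R) : R :=
  if Rlt_dec 0 alpha then Rpower r (- alpha)
  else if Req_EM_T alpha 0 then ln (N0 / r) else 1.

From Coquelicot Require Import Coquelicot.
From Stdlib Require Import Reals Lra Lia ZArith Classical List.
Open Scope R_scope.

(* Write [S = |t-s|^(gamma/4) + |x-y|^(gamma/2)], [B = gammat b / gamma],
   [q = p / (2d)] and [D = (4 + 2k) / gamma].  Comparing the two homogeneous
   quasi-norms, the integrand is at most [2^B g_a(S)], where [g_a(s) = s^-B]
   for [s >= a] and [g_a(s) = a^-B (s/a)^-c] for [s < a], with
   [c = max(B - q, 0)].  With [theta = 2^(-gamma/2)], the superlevel set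
   [{f > 2^B g_a(theta^n)}] lies in [{|t-s| < 4^-n, |x_i-y_i| < 2^-n}], which
   is covered by boxes of total volume [O(theta^(nD))].  A layer-cake
   decomposition of any step function below [f] therefore bounds its integral
   by [sum_n g_a(theta^n) theta^(nD)], and because [c < D] (this is the
   hypothesis on [p]) splitting the series at [theta^n ~ a] gives
   [O(K_(B-D)(a))].  The volume comparisons behind the layer-cake step (boxes
   with disjoint interiors inside a union of boxes) are proved by induction on
   the dimension, integrating slices in the last coordinate. *)

Definition ind_open (l r x : R) : R :=
  if Rlt_dec l x then (if Rlt_dec x r then 1 else 0) else 0.
Definition ind_closed (l r x : R) : R :=
  if Rle_dec l x then (if Rle_dec x r then 1 else 0) else 0.

Definition weighted_sum (ind : R -> R -> R -> R) (L : list (R * (R * R))) (x : R) : R :=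
  fold_right (fun t acc => fst t * ind (fst (snd t)) (snd (snd t)) x + acc) 0 L.
Definition weighted_length (L : list (R * (R * R))) : R :=
  fold_right (fun t acc => fst t * (snd (snd t) - fst (snd t)) + acc) 0 L.

Lemma is_RInt_const_inside (f : R -> R) (a b c : R) : a <= b ->
  (forall x, a < x < b -> f x = c) -> is_RInt f a b ((b - a) * c).
Proof.
  intros hab h. eapply is_RInt_ext; [| apply (is_RInt_const a b c)].
  intros x hx. rewrite Rmin_left in hx by lra. rewrite Rmax_right in hx by lra.
  symmetry; apply h; lra.
Qed.

Lemma is_RInt_interval_indicator (ind : R -> R -> R -> R) (A B l r : R) :
  (forall x, l < x < r -> ind l r x = 1) ->
  (forall x, x < l -> ind l r x = 0) ->
  (forall x, r < x -> ind l r x = 0) ->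
  A <= l -> l <= r -> r <= B -> is_RInt (ind l r) A B (r - l).
Proof.
  intros h1 h2 h3 hA hlr hB.
  replace (r - l) with (plus (plus ((l - A) * 0) ((r - l) * 1)) ((B - r) * 0))
    by (unfold plus; simpl; ring).
  apply (@is_RInt_Chasles R_NormedModule) with r;
    [apply (@is_RInt_Chasles R_NormedModule) with l|].
  - apply is_RInt_const_inside; auto. intros; apply h2; lra.
  - apply is_RInt_const_inside; auto.
  - apply is_RInt_const_inside; auto. intros; apply h3; lra.
Qed.

Lemma is_RInt_ind_open A B l r :
  A <= l -> l <= r -> r <= B -> is_RInt (ind_open l r) A B (r - l).
Proof.
  apply is_RInt_interval_indicator; intros x hx; unfold ind_open;
    repeat destruct Rlt_dec; lra.
Qed.

Lemma is_RInt_ind_closed A B l r :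
  A <= l -> l <= r -> r <= B -> is_RInt (ind_closed l r) A B (r - l).
Proof.
  apply is_RInt_interval_indicator; intros x hx; unfold ind_closed;
    repeat destruct Rle_dec; lra.
Qed.

Lemma is_RInt_weighted_sum (ind : R -> R -> R -> R) A B L : A <= B ->
  (forall l r, A <= l -> l <= r -> r <= B -> is_RInt (ind l r) A B (r - l)) ->
  (forall t, In t L -> A <= fst (snd t) <= snd (snd t) /\ snd (snd t) <= B) ->
  is_RInt (weighted_sum ind L) A B (weighted_length L).
Proof.
  intros hAB hi. induction L as [|[w [l r]] L IH]; intros hL; simpl.
  - assert (H := is_RInt_const_inside (fun _ => 0) A B 0 hAB (fun _ _ => eq_refl)).
    replace ((B - A) * 0) with 0 in H by ring. exact H.
  - assert (H1 : is_RInt (ind l r) A B (r - l)).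
    { destruct (hL (w, (l, r))) as [[? ?] ?]; [left; auto|]. apply hi; auto. }
    apply (@is_RInt_scal R_NormedModule _ _ _ w) in H1.
    exact (@is_RInt_plus R_NormedModule _ _ _ _ _ _ H1 (IH (fun t ht => hL t (or_intror ht)))).
Qed.

Lemma interval_list_bounded (L : list (R * (R * R))) :
  exists A B, A <= B /\ forall t, In t L -> A <= fst (snd t) /\ snd (snd t) <= B.
Proof.
  induction L as [|[w [l r]] L [A [B [hAB h]]]].
  - exists 0, 0; split; [lra | intros t []].
  - exists (Rmin A l), (Rmax B r). split.
    { pose proof (Rmin_l A l); pose proof (Rmax_l B r); lra. }
    intros t [<-|ht]; simpl.
    + split; [apply Rmin_r | apply Rmax_r].
    + destruct (h t ht). pose proof (Rmin_l A l); pose proof (Rmax_l B r); lra.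
Qed.

(* Integrate both sides over an interval containing all the intervals. *)
Lemma weighted_length_le (LB LQ : list (R * (R * R))) :
  (forall t, In t LB -> fst (snd t) <= snd (snd t)) ->
  (forall t, In t LQ -> fst (snd t) <= snd (snd t)) ->
  (forall x, weighted_sum ind_open LB x <= weighted_sum ind_closed LQ x) ->
  weighted_length LB <= weighted_length LQ.
Proof.
  intros hB hQ hx.
  destruct (interval_list_bounded (LB ++ LQ)) as [A [B [hle hAB]]].
  apply (is_RInt_le (weighted_sum ind_open LB) (weighted_sum ind_closed LQ) A B); auto.
  - apply is_RInt_weighted_sum; auto; [intros; apply is_RInt_ind_open; auto|].
    intros t ht. destruct (hAB t) as [? ?]; [apply in_or_app; auto|]. auto.
  - apply is_RInt_weighted_sum; auto; [intros; apply is_RInt_ind_closed; auto|].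
    intros t ht. destruct (hAB t) as [? ?]; [apply in_or_app; auto|]. auto.
Qed.

Definition box := ((nat -> R) * (nat -> R))%type.

Definition total_vol m (L : list box) : R :=
  fold_right (fun Q acc => box_vol m (fst Q) (snd Q) + acc) 0 L.

Definition box_ok m (Q : box) : Prop := forall i, (i < m)%nat -> fst Q i <= snd Q i.

Definition interiors_disjoint m (Q Q' : box) : Prop :=
  exists i, (i < m)%nat /\ (snd Q i <= fst Q' i \/ snd Q' i <= fst Q i).

Definition covered_by m (LB LQ : list box) : Prop :=
  forall Q, In Q LB -> forall z, in_box m (fst Q) (snd Q) z ->
  exists Q', In Q' LQ /\ in_box m (fst Q') (snd Q') z.

Lemma rprod_nonneg n f : (forall i, (i < n)%nat -> 0 <= f i) -> 0 <= rprod n f.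
Proof.
  induction n; intros h; simpl; [lra|].
  apply Rmult_le_pos; [apply IHn; intros; apply h; lia | apply h; lia].
Qed.

Lemma box_vol_nonneg m Q : box_ok m Q -> 0 <= box_vol m (fst Q) (snd Q).
Proof. intros h. apply rprod_nonneg. intros i hi. specialize (h i hi). lra. Qed.

Lemma total_vol_nonneg m L : Forall (box_ok m) L -> 0 <= total_vol m L.
Proof. induction 1; simpl; [lra|]. pose proof (box_vol_nonneg m x H). lra. Qed.

Lemma box_vol_le_total_vol m L Q : Forall (box_ok m) L -> In Q L ->
  box_vol m (fst Q) (snd Q) <= total_vol m L.
Proof.
  induction 1; intros hin; [destruct hin | destruct hin as [<-|h]]; simpl.
  - pose proof (total_vol_nonneg m l H0). lra.
  - pose proof (box_vol_nonneg m x H). specialize (IHForall h). lra.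
Qed.

Lemma total_vol_app m L1 L2 : total_vol m (L1 ++ L2) = total_vol m L1 + total_vol m L2.
Proof. induction L1; simpl; [ring|]. rewrite IHL1; ring. Qed.

Lemma ForallOrdPairs_filter {A} (R : A -> A -> Prop) f l :
  ForallOrdPairs R l -> ForallOrdPairs R (filter f l).
Proof.
  induction 1; simpl; [constructor|].
  destruct (f a); auto. constructor; auto.
  rewrite Forall_forall in *. intros y hy. apply filter_In in hy. apply H; tauto.
Qed.

Lemma ForallOrdPairs_impl_in {A} (R R' : A -> A -> Prop) l :
  (forall x y, In x l -> In y l -> R x y -> R' x y) ->
  ForallOrdPairs R l -> ForallOrdPairs R' l.
Proof.
  intros h H. induction H; constructor.
  - rewrite Forall_forall in *. intros y hy. apply h; simpl; auto.
  - apply IHForallOrdPairs. intros; apply h; simpl; auto.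
Qed.

Lemma ForallOrdPairs_map {A B} (R : A -> A -> Prop) (R' : B -> B -> Prop) (g : A -> B) l :
  (forall x y, R x y -> R' (g x) (g y)) -> ForallOrdPairs R l -> ForallOrdPairs R' (map g l).
Proof.
  intros h H. induction H; simpl; constructor; auto.
  rewrite Forall_map. eapply Forall_impl; [|exact H]. auto.
Qed.

Lemma Forall_filter {A} (P : A -> Prop) f l : Forall P l -> Forall P (filter f l).
Proof. rewrite !Forall_forall. intros h x hx. apply filter_In in hx. apply h; tauto. Qed.

(* Slicing at [x] in the last coordinate [m]: the open slice of the boxes to be
   measured, and the closed slice of the covering boxes. *)
Definition meets_open m x (Q : box) : bool :=
  if Rlt_dec (fst Q m) x then (if Rlt_dec x (snd Q m) then true else false) else false.
Definition meets_closed m x (Q : box) : bool :=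
  if Rle_dec (fst Q m) x then (if Rle_dec x (snd Q m) then true else false) else false.

Definition last_sides m (L : list box) : list (R * (R * R)) :=
  map (fun Q => (box_vol m (fst Q) (snd Q), (fst Q m, snd Q m))) L.

Lemma weighted_length_last_sides m L : weighted_length (last_sides m L) = total_vol (S m) L.
Proof. induction L; simpl; auto. rewrite IHL. reflexivity. Qed.

Lemma weighted_sum_last_sides_open m x L :
  weighted_sum ind_open (last_sides m L) x = total_vol m (filter (meets_open m x) L).
Proof.
  induction L as [|Q L IH]; simpl; auto. rewrite IH. unfold meets_open, ind_open.
  destruct Rlt_dec; [destruct Rlt_dec|]; simpl; ring.
Qed.

Lemma weighted_sum_last_sides_closed m x L :
  weighted_sum ind_closed (last_sides m L) x = total_vol m (filter (meets_closed m x) L).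
Proof.
  induction L as [|Q L IH]; simpl; auto. rewrite IH. unfold meets_closed, ind_closed.
  destruct Rle_dec; [destruct Rle_dec|]; simpl; ring.
Qed.

Lemma last_sides_ok m L t : Forall (box_ok (S m)) L -> In t (last_sides m L) ->
  fst (snd t) <= snd (snd t).
Proof.
  intros hL ht. apply in_map_iff in ht. destruct ht as [Q [<- hQ]].
  rewrite Forall_forall in hL. apply hL; auto.
Qed.

Lemma interiors_disjoint_slice m x LB :
  ForallOrdPairs (interiors_disjoint (S m)) LB ->
  ForallOrdPairs (interiors_disjoint m) (filter (meets_open m x) LB).
Proof.
  intros hs. apply ForallOrdPairs_impl_in with (R := interiors_disjoint (S m));
    [| apply ForallOrdPairs_filter; auto].
  intros Q1 Q2 h1 h2 [i [hi hsep]].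
  apply filter_In in h1, h2. destruct h1 as [_ h1]; destruct h2 as [_ h2].
  unfold meets_open in h1, h2.
  destruct (Rlt_dec (fst Q1 m) x); [|discriminate]; destruct (Rlt_dec x (snd Q1 m)); [|discriminate].
  destruct (Rlt_dec (fst Q2 m) x); [|discriminate]; destruct (Rlt_dec x (snd Q2 m)); [|discriminate].
  destruct (Nat.eq_dec i m) as [->|hne]; [lra|].
  exists i; split; [lia|auto].
Qed.

Lemma covered_by_slice m x LB LQ : covered_by (S m) LB LQ ->
  covered_by m (filter (meets_open m x) LB) (filter (meets_closed m x) LQ).
Proof.
  intros hc Q hQin z hz. apply filter_In in hQin. destruct hQin as [hQin hp].
  unfold meets_open in hp.
  destruct (Rlt_dec (fst Q m) x); [|discriminate]; destruct (Rlt_dec x (snd Q m)); [|discriminate].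
  set (z' := fun i => if Nat.eq_dec i m then x else z i).
  destruct (hc Q hQin z') as [Q' [hQ'in hQ'z]].
  { intros i hi. unfold z'. destruct (Nat.eq_dec i m) as [->|hne]; [lra|]. apply hz; lia. }
  exists Q'; split.
  - apply filter_In; split; auto. unfold meets_closed.
    destruct (hQ'z m ltac:(lia)) as [h1 h2]. unfold z' in h1, h2.
    destruct (Nat.eq_dec m m); [|congruence].
    destruct Rle_dec; [|lra]; destruct Rle_dec; [|lra]; auto.
  - intros i hi. destruct (hQ'z i ltac:(lia)) as [h1 h2]. unfold z' in h1, h2.
    destruct (Nat.eq_dec i m); [lia|]. auto.
Qed.

(* Induction on the dimension: integrate the slice inequality over the last
   coordinate. *)
Lemma total_vol_le_of_covered m : forall LB LQ,
  Forall (box_ok m) LB -> Forall (box_ok m) LQ ->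
  ForallOrdPairs (interiors_disjoint m) LB -> covered_by m LB LQ ->
  total_vol m LB <= total_vol m LQ.
Proof.
  induction m as [|m IH]; intros LB LQ hB hQ hs hc.
  - (* In dimension 0 every box has volume 1 and no two interiors are disjoint. *)
    destruct LB as [|Q [|Q' LB]]; [simpl; apply total_vol_nonneg; auto | |].
    + destruct (hc Q (or_introl eq_refl) (fun _ => 0)) as [Q' [hQ'in _]];
        [intros i hi; lia|].
      pose proof (box_vol_le_total_vol 0 LQ Q' hQ hQ'in).
      unfold total_vol, box_vol in *; simpl in *. lra.
    + inversion hs as [|? ? hhead _]. inversion hhead as [|? ? [i [hi _]] _]. lia.
  - rewrite <- !weighted_length_last_sides. apply weighted_length_le.
    + intros t; apply last_sides_ok; auto.
    + intros t; apply last_sides_ok; auto.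
    + intros x. rewrite weighted_sum_last_sides_open, weighted_sum_last_sides_closed.
      apply IH.
      * apply Forall_filter. eapply Forall_impl; [|exact hB]. intros Q h i hi; apply h; lia.
      * apply Forall_filter. eapply Forall_impl; [|exact hQ]. intros Q h i hi; apply h; lia.
      * apply interiors_disjoint_slice; auto.
      * apply covered_by_slice; auto.
Qed.

Lemma rprod_ext n f g : (forall j, (j < n)%nat -> f j = g j) -> rprod n f = rprod n g.
Proof.
  induction n; intros h; simpl; auto.
  rewrite IHn by (intros; apply h; lia). rewrite h by lia. auto.
Qed.

Lemma rprod_update n f g p u : (forall j, j <> p -> g j = f j) -> g p = u -> (p < n)%nat ->
  rprod n g * f p = rprod n f * u.
Proof.
  induction n; intros h1 h2 hp; [lia|]. simpl.
  destruct (Nat.eq_dec n p) as [->|hne].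
  - rewrite (rprod_ext p g f) by (intros; apply h1; lia). rewrite h2. ring.
  - rewrite (h1 n hne). transitivity (rprod n g * f p * f n); [ring|].
    rewrite IHn by (auto; lia). ring.
Qed.

Lemma rprod_scal k F e : rprod k (fun i => F i * e) = rprod k F * e ^ k.
Proof. induction k; simpl; [ring|]. rewrite IHk. ring. Qed.

Lemma rprod_pos n F : (forall i, (i < n)%nat -> 0 < F i) -> 0 < rprod n F.
Proof.
  induction n; intros h; simpl; [lra|].
  apply Rmult_lt_0_compat; [apply IHn; intros; apply h; lia | apply h; lia].
Qed.

Definition set2 (f : nat -> R) (p1 p2 : nat) (v : R) : nat -> R :=
  fun j => if Nat.eq_dec j p1 then v else if Nat.eq_dec j p2 then v else f j.

Lemma rprod_set2 n f p1 p2 u : p1 <> p2 -> (p1 < n)%nat -> (p2 < n)%nat ->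
  rprod n (set2 f p1 p2 u) * (f p1 * f p2) = rprod n f * (u * u).
Proof.
  intros hne h1 h2.
  set (g := fun j => if Nat.eq_dec j p2 then u else f j).
  assert (E1 : rprod n (set2 f p1 p2 u) * g p1 = rprod n g * u).
  { apply rprod_update; auto; unfold set2, g.
    - intros j hj. destruct (Nat.eq_dec j p1); [congruence|]. reflexivity.
    - destruct (Nat.eq_dec p1 p1); congruence. }
  assert (E2 : rprod n g * f p2 = rprod n f * u).
  { apply rprod_update; auto; unfold g.
    - intros j hj. destruct (Nat.eq_dec j p2); [congruence|]. reflexivity.
    - destruct (Nat.eq_dec p2 p2); congruence. }
  assert (E3 : g p1 = f p1) by (unfold g; destruct (Nat.eq_dec p1 p2); congruence).
  rewrite E3 in E1.
  transitivity (rprod n (set2 f p1 p2 u) * f p1 * f p2); [ring|].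
  rewrite E1. transitivity (rprod n g * f p2 * u); [ring|]. rewrite E2. ring.
Qed.

Definition split_box p1 p2 (ivs : list (R * R)) (Q : box) : list box :=
  map (fun iv => (set2 (fst Q) p1 p2 (fst iv), set2 (snd Q) p1 p2 (snd iv))) ivs.
Definition split_boxes p1 p2 ivs (LQ : list box) : list box := flat_map (split_box p1 p2 ivs) LQ.
Definition sq_length_sum (ivs : list (R * R)) : R :=
  fold_right (fun iv acc => (snd iv - fst iv) * (snd iv - fst iv) + acc) 0 ivs.

Section SplitVolume.
Variables (m p1 p2 : nat) (L : R).
Hypotheses (hne : p1 <> p2) (h1 : (p1 < m)%nat) (h2 : (p2 < m)%nat) (hL : L <> 0).

Lemma total_vol_split_box Q ivs :
  snd Q p1 - fst Q p1 = L -> snd Q p2 - fst Q p2 = L ->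
  total_vol m (split_box p1 p2 ivs Q) = box_vol m (fst Q) (snd Q) * sq_length_sum ivs / (L * L).
Proof.
  intros e1 e2. induction ivs as [|iv ivs IH]; simpl; [field; auto|].
  rewrite IH. unfold box_vol.
  assert (E := rprod_set2 m (fun i => snd Q i - fst Q i) p1 p2 (snd iv - fst iv) hne h1 h2).
  simpl in E. rewrite e1, e2 in E.
  rewrite (rprod_ext m _ (set2 (fun i => snd Q i - fst Q i) p1 p2 (snd iv - fst iv)))
    by (intros j _; unfold set2; repeat destruct Nat.eq_dec; auto).
  apply (Rmult_eq_reg_r (L * L)); [| apply Rmult_integral_contrapositive; tauto].
  rewrite Rmult_plus_distr_r, E. field. auto.
Qed.

Lemma total_vol_split_boxes LQ ivs :
  (forall Q, In Q LQ -> snd Q p1 - fst Q p1 = L /\ snd Q p2 - fst Q p2 = L) ->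
  total_vol m (split_boxes p1 p2 ivs LQ) = total_vol m LQ * sq_length_sum ivs / (L * L).
Proof.
  intros hQ. induction LQ as [|Q LQ IH]; simpl; [field; auto|].
  unfold split_boxes in *; simpl. rewrite total_vol_app.
  rewrite IH by (intros; apply hQ; simpl; auto).
  destruct (hQ Q (or_introl eq_refl)).
  rewrite total_vol_split_box by auto. field; auto.
Qed.

End SplitVolume.

Lemma split_box_ok m p1 p2 ivs Q : box_ok m Q -> (forall iv, In iv ivs -> fst iv <= snd iv) ->
  forall Q', In Q' (split_box p1 p2 ivs Q) -> box_ok m Q'.
Proof.
  intros hQ hl Q' hQ'. apply in_map_iff in hQ'. destruct hQ' as [iv [<- hiv]].
  intros i hi. unfold set2; cbn [fst snd]. specialize (hl iv hiv).
  repeat destruct Nat.eq_dec; auto; apply hQ; auto.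
Qed.

Lemma in_split_box m p1 p2 ivs Q iv z : In iv ivs -> in_box m (fst Q) (snd Q) z ->
  fst iv <= z p1 <= snd iv -> fst iv <= z p2 <= snd iv ->
  exists Q', In Q' (split_box p1 p2 ivs Q) /\ in_box m (fst Q') (snd Q') z.
Proof.
  intros hiv hQ hz1 hz2.
  exists (set2 (fst Q) p1 p2 (fst iv), set2 (snd Q) p1 p2 (snd iv)). split.
  - apply in_map_iff. exists iv; auto.
  - intros i hi. unfold set2; cbn [fst snd].
    destruct Nat.eq_dec as [->|]; auto. destruct Nat.eq_dec as [->|]; auto.
Qed.

(* The intervals [l + (i-1) h, l + (i+2) h], [i < ceil (L/h)]: any two points
   of [[l, l+L]] at distance [< h] lie in a common one. *)
Definition band_count (L h : R) : nat := Z.to_nat (up (L / h)).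
Definition band_intervals (l L h : R) : list (R * R) :=
  map (fun i => (l + (INR i - 1) * h, l + (INR i + 2) * h)) (seq 0 (band_count L h)).

Lemma band_intervals_ok l L h : 0 < h -> forall iv, In iv (band_intervals l L h) -> fst iv <= snd iv.
Proof.
  intros hh iv hiv. apply in_map_iff in hiv. destruct hiv as [i [<- _]]. simpl. nra.
Qed.

Lemma sq_length_sum_band l L h :
  sq_length_sum (band_intervals l L h) = INR (band_count L h) * (9 * (h * h)).
Proof.
  unfold band_intervals. rewrite <- (length_seq (band_count L h) 0) at 2.
  induction (seq 0 (band_count L h)) as [|i s IH]; simpl; [ring|].
  rewrite IH. destruct (length s); simpl; ring.
Qed.

Lemma band_count_le L h : 0 <= L -> 0 < h -> INR (band_count L h) <= L / h + 1.
Proof.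
  intros hL hh. unfold band_count. destruct (archimed (L / h)) as [a1 a2].
  assert (0 <= L / h) by (apply Rdiv_le_0_compat; lra).
  assert (hz : (0 <= up (L / h))%Z) by (apply le_IZR; lra).
  rewrite INR_IZR_INZ, Z2Nat.id by auto. lra.
Qed.

Lemma band_intervals_cover l L h t s : 0 < h -> l <= t <= l + L -> l <= s <= l + L ->
  Rabs (t - s) < h ->
  exists iv, In iv (band_intervals l L h) /\ fst iv <= t <= snd iv /\ fst iv <= s <= snd iv.
Proof.
  intros hh ht hs hts.
  set (y := (t - l) / h).
  assert (hy : 0 <= y) by (apply Rdiv_le_0_compat; lra).
  assert (hyL : y <= L / h) by (unfold y, Rdiv; apply Rmult_le_compat_r;
    [left; apply Rinv_0_lt_compat|]; lra).
  destruct (archimed y) as [a1 a2].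
  destruct (archimed (L / h)) as [b1 b2].
  set (i := (up y - 1)%Z).
  assert (hi1 : IZR i <= y) by (unfold i; rewrite minus_IZR; simpl; lra).
  assert (hi2 : y < IZR i + 1) by (unfold i; rewrite minus_IZR; simpl; lra).
  assert (hi0 : (0 <= i)%Z) by (cut (-1 < i)%Z; [lia | apply lt_IZR; simpl; lra]).
  assert (hiL : (i < up (L / h))%Z) by (apply lt_IZR; lra).
  exists (l + (IZR i - 1) * h, l + (IZR i + 2) * h). split.
  - apply in_map_iff. exists (Z.to_nat i). split.
    + rewrite INR_IZR_INZ, Z2Nat.id by auto. reflexivity.
    + apply in_seq. split; [lia|]. simpl. unfold band_count. apply Z2Nat.inj_lt; lia.
  - assert (e1 : IZR i * h <= t - l).
    { replace (t - l) with (y * h) by (unfold y; field; lra). nra. }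
    assert (e2 : t - l < (IZR i + 1) * h).
    { replace (t - l) with (y * h) by (unfold y; field; lra). nra. }
    apply Rabs_def2 in hts. simpl. nra.
Qed.

Definition band_factor (L : R) : R := 9 * (L + 1) / (L * L).

Lemma band_factor_pos L : 0 < L -> 0 < band_factor L.
Proof. intros hL. unfold band_factor. apply Rdiv_lt_0_compat; nra. Qed.

Lemma sq_length_sum_band_le l L h : 0 < L -> 0 < h -> h <= 1 ->
  sq_length_sum (band_intervals l L h) / (L * L) <= band_factor L * h.
Proof.
  intros hL hh h1. rewrite sq_length_sum_band. pose proof (band_count_le L h ltac:(lra) hh).
  unfold band_factor, Rdiv.
  assert (0 < / (L * L)) by (apply Rinv_0_lt_compat; nra).
  apply (Rmult_le_compat_r (9 * (h * h))) in H; [|nra].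
  replace ((L / h + 1) * (9 * (h * h))) with (9 * (h * (L + h))) in H by (field; lra).
  replace (9 * (L + 1) * / (L * L) * h) with (9 * (h * (L + 1)) * / (L * L)) by ring.
  apply Rmult_le_compat_r; [lra|].
  apply Rle_trans with (9 * (h * (L + h))); [exact H | nra].
Qed.

Section DiagonalCover.
Variables (k : nat) (t0 t1 : R) (aJ bJ : nat -> R) (eps : R).
Hypothesis ht : t0 < t1.
Hypothesis hJ : forall i, (i < k)%nat -> aJ i < bJ i.
Hypothesis heps : 0 < eps.

Definition big_box : box := (corner k t0 aJ, corner k t1 bJ).

Lemma corner_x t a i : (i < k)%nat -> corner k t a (2 + i)%nat = a i.
Proof.
  intros hi. unfold corner. destruct (Nat.ltb_spec (2 + i)%nat 2); [lia|].
  destruct (Nat.ltb_spec (2 + i)%nat (2 + k)); [|lia]. f_equal; lia.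
Qed.

Lemma corner_y t a i : (i < k)%nat -> corner k t a (2 + k + i)%nat = a i.
Proof.
  intros hi. unfold corner. destruct (Nat.ltb_spec (2 + k + i)%nat 2); [lia|].
  destruct (Nat.ltb_spec (2 + k + i)%nat (2 + k)); [lia|]. f_equal; lia.
Qed.

Lemma big_box_side_pos i : (i < 2 + 2 * k)%nat -> 0 < snd big_box i - fst big_box i.
Proof.
  intros hi. unfold big_box, corner; cbn [fst snd].
  destruct (Nat.ltb_spec i 2); [lra|]. destruct (Nat.ltb_spec i (2 + k)).
  - specialize (hJ (i - 2) ltac:(lia)). lra.
  - specialize (hJ (i - 2 - k) ltac:(lia)). lra.
Qed.

Lemma big_box_ok : box_ok (2 + 2 * k) big_box.
Proof. intros i hi. pose proof (big_box_side_pos i hi). lra. Qed.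

Lemma box_vol_big_box_pos : 0 < box_vol (2 + 2 * k) (fst big_box) (snd big_box).
Proof. apply rprod_pos. apply big_box_side_pos. Qed.

(* Boxes covering the points of [big_box] with [|t - s| < eps^2] and
   [|x_i - y_i| < eps] for [i < j]. *)
Fixpoint diag_cover (j : nat) : list box :=
  match j with
  | O => split_box 0 1 (band_intervals t0 (t1 - t0) (eps * eps)) big_box
  | S j => split_boxes (2 + j) (2 + k + j) (band_intervals (aJ j) (bJ j - aJ j) eps) (diag_cover j)
  end.

Lemma diag_cover_untouched j Q : In Q (diag_cover j) ->
  forall i, (j <= i < k)%nat ->
  fst Q (2 + i)%nat = aJ i /\ snd Q (2 + i)%nat = bJ i /\
  fst Q (2 + k + i)%nat = aJ i /\ snd Q (2 + k + i)%nat = bJ i.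
Proof.
  revert Q; induction j as [|j IH]; intros Q hQ i hi; simpl in hQ.
  - apply in_map_iff in hQ. destruct hQ as [iv [<- _]].
    unfold set2; cbn [fst snd big_box].
    repeat (destruct Nat.eq_dec; [lia|]). rewrite !corner_x, !corner_y by lia. auto.
  - apply in_flat_map in hQ. destruct hQ as [Q0 [hQ0 hQ]].
    apply in_map_iff in hQ. destruct hQ as [iv [<- _]].
    destruct (IH Q0 hQ0 i ltac:(lia)) as [e1 [e2 [e3 e4]]].
    unfold set2; cbn [fst snd]. repeat (destruct Nat.eq_dec; [lia|]). auto.
Qed.

Lemma diag_cover_ok j Q : In Q (diag_cover j) -> box_ok (2 + 2 * k) Q.
Proof.
  revert Q; induction j as [|j IH]; intros Q hQ; simpl in hQ.
  - eapply split_box_ok; [apply big_box_ok| |exact hQ]. apply band_intervals_ok. nra.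
  - apply in_flat_map in hQ. destruct hQ as [Q0 [hQ0 hQ]].
    eapply split_box_ok; [apply IH; exact hQ0| |exact hQ]. apply band_intervals_ok. auto.
Qed.

Lemma total_vol_diag_cover j : (j <= k)%nat -> eps <= 1 ->
  total_vol (2 + 2 * k) (diag_cover j) <=
  box_vol (2 + 2 * k) (fst big_box) (snd big_box) * (band_factor (t1 - t0) * (eps * eps)) *
  rprod j (fun i => band_factor (bJ i - aJ i) * eps).
Proof.
  intros hj he. pose proof box_vol_big_box_pos as hV.
  induction j as [|j IH]; cbn [diag_cover rprod].
  - rewrite (total_vol_split_box _ 0 1 (t1 - t0)) by (try lia; try lra; reflexivity).
    rewrite Rmult_1_r. unfold Rdiv. rewrite Rmult_assoc. apply Rmult_le_compat_l; [lra|].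
    apply sq_length_sum_band_le; nra.
  - pose proof (hJ j ltac:(lia)) as hJj.
    rewrite (total_vol_split_boxes _ _ _ (bJ j - aJ j)); try lia; [| lra |].
    2: { intros Q hQ. destruct (diag_cover_untouched j Q hQ j ltac:(lia)) as [-> [-> [-> ->]]].
         auto. }
    assert (hf : 0 <= band_factor (bJ j - aJ j) * eps).
    { pose proof (band_factor_pos (bJ j - aJ j)). nra. }
    assert (hs : 0 <= total_vol (2 + 2 * k) (diag_cover j)).
    { apply total_vol_nonneg. apply Forall_forall. apply diag_cover_ok. }
    assert (hb := sq_length_sum_band_le (aJ j) (bJ j - aJ j) eps ltac:(lra) heps he).
    unfold Rdiv in *. rewrite Rmult_assoc.
    apply Rle_trans with (total_vol (2 + 2 * k) (diag_cover j) * (band_factor (bJ j - aJ j) * eps)).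
    + apply Rmult_le_compat_l; auto.
    + eapply Rle_trans; [apply Rmult_le_compat_r; [exact hf | apply IH; lia] | right; ring].
Qed.

Lemma diag_cover_covers j z : (j <= k)%nat ->
  in_box (2 + 2 * k) (fst big_box) (snd big_box) z ->
  Rabs (z 0%nat - z 1%nat) < eps * eps ->
  (forall i, (i < j)%nat -> Rabs (z (2 + i)%nat - z (2 + k + i)%nat) < eps) ->
  exists Q, In Q (diag_cover j) /\ in_box (2 + 2 * k) (fst Q) (snd Q) z.
Proof.
  intros hj hz h0 hx. unfold big_box in hz; cbn [fst snd] in hz.
  induction j as [|j IH].
  - destruct (band_intervals_cover t0 (t1 - t0) (eps * eps) (z 0%nat) (z 1%nat))
      as [iv [hiv [i1 i2]]]; auto.
    + nra.
    + destruct (hz 0%nat ltac:(lia)). unfold corner in *; simpl in *. lra.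
    + destruct (hz 1%nat ltac:(lia)). unfold corner in *; simpl in *. lra.
    + eapply in_split_box; eauto.
  - destruct IH as [Q [hQ hzQ]]; [lia | intros; apply hx; lia |].
    destruct (band_intervals_cover (aJ j) (bJ j - aJ j) eps (z (2 + j)%nat) (z (2 + k + j)%nat))
      as [iv [hiv [i1 i2]]]; auto.
    + destruct (hz (2 + j)%nat ltac:(lia)). rewrite !corner_x in * by lia. lra.
    + destruct (hz (2 + k + j)%nat ltac:(lia)). rewrite !corner_y in * by lia. lra.
    + destruct (in_split_box _ (2 + j)%nat (2 + k + j)%nat _ Q iv z hiv hzQ i1 i2) as [Q' [? ?]].
      exists Q'. split; auto. apply in_flat_map. exists Q; auto.
Qed.

End DiagonalCover.

Lemma rsum_ext n F G : (forall i, F i = G i) -> rsum n F = rsum n G.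
Proof. intros h; induction n; simpl; auto. rewrite IHn, h; auto. Qed.

Lemma rsum_plus n F G : rsum n (fun i => F i + G i) = rsum n F + rsum n G.
Proof. induction n; simpl; [ring|]. rewrite IHn. ring. Qed.

Lemma rsum_scal_r n F v : rsum n (fun i => F i * v) = rsum n F * v.
Proof. induction n; simpl; [ring|]. rewrite IHn. ring. Qed.

Lemma rsum_scal_l n F v : rsum n (fun i => v * F i) = v * rsum n F.
Proof. induction n; simpl; [ring|]. rewrite IHn. ring. Qed.

Lemma rsum_le n F G : (forall i, (i < n)%nat -> F i <= G i) -> rsum n F <= rsum n G.
Proof.
  induction n; intros h; simpl; [lra|].
  apply Rplus_le_compat; [apply IHn; intros; apply h; lia | apply h; lia].
Qed.

Lemma rsum_nonneg n F : (forall i, (i < n)%nat -> 0 <= F i) -> 0 <= rsum n F.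
Proof.
  intros h. replace 0 with (rsum n (fun _ => 0 * 0)) by (rewrite rsum_scal_r; ring).
  apply rsum_le. intros; rewrite Rmult_0_l; auto.
Qed.

Lemma rsum_shift M F : rsum (S M) F = F 0%nat + rsum M (fun n => F (S n)).
Proof. induction M; simpl in *; [ring|]. rewrite IHM. ring. Qed.

Lemma rsum_ge_term n F i : (forall j, (j < n)%nat -> 0 <= F j) -> (i < n)%nat -> F i <= rsum n F.
Proof.
  induction n; intros h hi; [lia|]. simpl.
  destruct (Nat.eq_dec i n) as [->|hne].
  - assert (0 <= rsum n F) by (apply rsum_nonneg; intros; apply h; lia). lra.
  - assert (F i <= rsum n F) by (apply IHn; [intros; apply h; lia | lia]).
    specialize (h n ltac:(lia)). lra.
Qed.

Definition ind_lt (x a : R) : R := if Rlt_dec x a then 1 else 0.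
Definition ind_le (a x : R) : R := if Rle_dec a x then 1 else 0.

Lemma ind_lt_01 x a : 0 <= ind_lt x a <= 1.
Proof. unfold ind_lt; destruct Rlt_dec; lra. Qed.
Lemma ind_le_01 x a : 0 <= ind_le x a <= 1.
Proof. unfold ind_le; destruct Rle_dec; lra. Qed.

Section LayerCake.
Variable lam : nat -> R.
Hypothesis lam_incr : forall n, lam n <= lam (S n).
Hypothesis lam0_nonneg : 0 <= lam 0%nat.

Lemma lam_le n m : (n <= m)%nat -> lam n <= lam m.
Proof. induction 1; [lra|]. specialize (lam_incr m). lra. Qed.

Lemma lam_nonneg n : 0 <= lam n.
Proof. pose proof (lam_le 0 n ltac:(lia)). lra. Qed.

Lemma min_le_layer_sum c M :
  Rmin c (lam M) <= lam 0%nat + rsum M (fun n => (lam (S n) - lam n) * ind_lt (lam n) c).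
Proof.
  induction M; simpl; [pose proof (Rmin_r c (lam 0%nat)); lra|].
  specialize (lam_incr M). unfold ind_lt, Rmin in *.
  destruct (Rlt_dec (lam M) c), (Rle_dec c (lam M)), (Rle_dec c (lam (S M))); lra.
Qed.

Lemma exists_lam_bound (cs : list R) : (forall c, In c cs -> exists n, c <= lam n) ->
  exists M, forall c, In c cs -> c <= lam M.
Proof.
  induction cs as [|c0 cs IH]; intros h; [exists 0%nat; intros c []|].
  destruct IH as [M1 h1]; [intros; apply h; simpl; auto|].
  destruct (h c0 (or_introl eq_refl)) as [M2 h2].
  exists (Nat.max M1 M2). intros c [<-|hc].
  - eapply Rle_trans; [exact h2 | apply lam_le; lia].
  - eapply Rle_trans; [apply h1; auto | apply lam_le; lia].
Qed.

Variable m : nat.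

Definition step := (R * (nat -> R) * (nat -> R))%type.
Definition step_box (e : step) : box := (snd (fst e), snd e).
Definition step_value (e : step) : R := fst (fst e).

Definition above_lam (n : nat) (e : step) : bool :=
  if Rlt_dec (lam n) (step_value e) then true else false.

Lemma step_sum_le_layers (l : list step) M :
  (forall e, In e l -> step_value e <= lam M) ->
  Forall (fun e => box_ok m (step_box e)) l ->
  step_sum m l <= lam 0%nat * total_vol m (map step_box l) +
    rsum M (fun n => (lam (S n) - lam n) * total_vol m (map step_box (filter (above_lam n) l))).
Proof.
  intros hc hok. induction l as [|[[c a] b] l IH]; simpl.
  - rewrite (rsum_ext M _ (fun _ => 0 * 0)) by (intros; ring). rewrite rsum_scal_r. lra.
  - inversion hok as [|? ? hab hok']; subst.
    assert (IH' := IH (fun e he => hc e (or_intror he)) hok').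
    assert (hv : 0 <= box_vol m a b) by exact (box_vol_nonneg m (a, b) hab).
    assert (L1 := min_le_layer_sum c M).
    rewrite Rmin_left in L1 by exact (hc _ (or_introl eq_refl)).
    rewrite (rsum_ext M _ (fun n => (lam (S n) - lam n) * ind_lt (lam n) c * box_vol m a b +
        (lam (S n) - lam n) * total_vol m (map step_box (filter (above_lam n) l)))).
    2: { intros n. unfold above_lam, ind_lt, step_value; simpl.
         destruct Rlt_dec; simpl; ring. }
    rewrite rsum_plus, rsum_scal_r.
    apply (Rmult_le_compat_r (box_vol m a b)) in L1; auto.
    rewrite Rmult_plus_distr_r in L1. rewrite Rmult_plus_distr_l. lra.
Qed.

Variables (lo hi : nat -> R) (f : (nat -> R) -> R).

Lemma admissible_step_In l e : admissible_step m lo hi f l -> In e l ->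
  box_ok m (step_box e) /\
  (forall i, (i < m)%nat -> lo i <= fst (step_box e) i /\ snd (step_box e) i <= hi i) /\
  (forall z, in_box m (fst (step_box e)) (snd (step_box e)) z -> step_value e <= f z).
Proof.
  intros [hF _] he. rewrite Forall_forall in hF. destruct e as [[c a] b].
  destruct (hF _ he) as [_ [hab hz]]. unfold step_box, step_value; simpl.
  split; [|split; [|exact hz]]; intros i Hi; destruct (hab i Hi); cbn [fst snd]; try split; lra.
Qed.

Lemma admissible_step_disjoint l : admissible_step m lo hi f l ->
  ForallOrdPairs (fun e e' => interiors_disjoint m (step_box e) (step_box e')) l.
Proof.
  intros [_ hP]. revert hP. apply ForallOrdPairs_impl_in.
  intros [[c a] b] [[c' a'] b'] _ _ h. exact h.
Qed.

Lemma admissible_step_ok l : admissible_step m lo hi f l ->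
  Forall (fun e => box_ok m (step_box e)) l.
Proof.
  intros hl. apply Forall_forall. intros e he. apply (admissible_step_In l e hl he).
Qed.

Lemma total_vol_steps_nonneg l p : admissible_step m lo hi f l ->
  0 <= total_vol m (map step_box (filter p l)).
Proof.
  intros hl. apply total_vol_nonneg. rewrite Forall_map.
  apply Forall_filter, (admissible_step_ok l hl).
Qed.

Lemma total_vol_step_le l : admissible_step m lo hi f l ->
  (forall i, (i < m)%nat -> lo i <= hi i) ->
  total_vol m (map step_box l) <= total_vol m ((lo, hi) :: nil).
Proof.
  intros hl hbig. apply total_vol_le_of_covered.
  - rewrite Forall_map. apply (admissible_step_ok l hl).
  - constructor; [|constructor]. exact hbig.
  - apply (ForallOrdPairs_map _ _ step_box l (fun _ _ h => h)), (admissible_step_disjoint l hl).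
  - intros Q hQ z hz. exists (lo, hi). split; [left; auto|].
    apply in_map_iff in hQ. destruct hQ as [e [<- he]].
    destruct (admissible_step_In l e hl he) as [_ [hin _]].
    intros i Hi. destruct (hin i Hi), (hz i Hi). cbn [fst snd] in *. lra.
Qed.

Variable LQ : nat -> list box.
Hypothesis LQ_ok : forall n, Forall (box_ok m) (LQ n).
Hypothesis LQ_covers : forall n z, in_box m lo hi z -> lam n < f z ->
  exists Q, In Q (LQ n) /\ in_box m (fst Q) (snd Q) z.

Lemma total_vol_above_le l n : admissible_step m lo hi f l ->
  total_vol m (map step_box (filter (above_lam n) l)) <= total_vol m (LQ n).
Proof.
  intros hl. apply total_vol_le_of_covered; auto.
  - rewrite Forall_map. apply Forall_filter, (admissible_step_ok l hl).
  - apply (ForallOrdPairs_map _ _ step_box _ (fun _ _ h => h)), ForallOrdPairs_filter.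
    apply (admissible_step_disjoint l hl).
  - intros Q hQ z hz. apply in_map_iff in hQ. destruct hQ as [e [<- he]].
    apply filter_In in he. destruct he as [he hlt]. unfold above_lam in hlt.
    destruct (Rlt_dec (lam n) (step_value e)) as [hlt'|]; [|discriminate].
    destruct (admissible_step_In l e hl he) as [_ [hin hval]].
    apply LQ_covers; [| specialize (hval z hz); lra].
    intros i Hi. destruct (hin i Hi), (hz i Hi). lra.
Qed.

Lemma step_sum_le_layer_cake l : admissible_step m lo hi f l ->
  (forall i, (i < m)%nat -> lo i <= hi i) ->
  (forall e, In e l -> exists n, step_value e <= lam n) ->
  exists M, step_sum m l <=
    lam 0%nat * total_vol m ((lo, hi) :: nil) + rsum M (fun n => lam (S n) * total_vol m (LQ n)).
Proof.
  intros hl hbig hM.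
  destruct (exists_lam_bound (map step_value l)) as [M hGM].
  { intros c hc. apply in_map_iff in hc. destruct hc as [e [<- he]]. auto. }
  exists M.
  eapply Rle_trans.
  { apply step_sum_le_layers.
    - intros e he. apply hGM. apply in_map; auto.
    - apply (admissible_step_ok l hl). }
  apply Rplus_le_compat.
  - apply Rmult_le_compat_l; [apply lam_nonneg | apply total_vol_step_le; auto].
  - apply rsum_le. intros n _.
    assert (hW := total_vol_above_le l n hl).
    assert (hW0 := total_vol_steps_nonneg l (above_lam n) hl).
    pose proof (lam_incr n). pose proof (lam_nonneg n).
    assert (0 <= lam n * total_vol m (map step_box (filter (above_lam n) l)))
      by (apply Rmult_le_pos; auto).
    apply Rle_trans with (lam (S n) * total_vol m (map step_box (filter (above_lam n) l)));
      [lra | apply Rmult_le_compat_l; lra].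
Qed.

End LayerCake.

Lemma ln_lt_0 x : 0 < x -> x < 1 -> ln x < 0.
Proof. intros; rewrite <- ln_1; apply ln_increasing; auto. Qed.

Lemma Rpower_pos x y : 0 < Rpower x y.
Proof. apply exp_pos. Qed.

Lemma Rpower_div x y z : 0 < x -> 0 < y -> Rpower (x / y) z = Rpower x z * Rpower y (- z).
Proof.
  intros; unfold Rpower, Rdiv. rewrite ln_mult, ln_Rinv by (auto; apply Rinv_0_lt_compat; auto).
  rewrite <- exp_plus. f_equal; ring.
Qed.

Lemma Rpower_1_l y : Rpower 1 y = 1.
Proof. unfold Rpower; rewrite ln_1, Rmult_0_r; apply exp_0. Qed.

Lemma Rpower_pow_comm x y n : 0 < x -> Rpower x y ^ n = Rpower (x ^ n) y.
Proof.
  intros hx. rewrite <- Rpower_pow by apply Rpower_pos. rewrite Rpower_mult.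
  unfold Rpower at 2. rewrite ln_pow by auto. unfold Rpower. f_equal; ring.
Qed.

Lemma Rle_Rpower_l_neg x x' y : 0 < x -> x <= x' -> y <= 0 -> Rpower x' y <= Rpower x y.
Proof.
  intros hx hxx' hy. unfold Rpower.
  assert (ln x <= ln x') by (apply ln_le; auto).
  destruct (Rle_lt_or_eq _ _ (ltac:(nra) : y * ln x' <= y * ln x)) as [h|h];
    [left; apply exp_increasing; auto | right; rewrite h; auto].
Qed.

Lemma Rpower_ge_1_neg x y : 0 < x -> x <= 1 -> y <= 0 -> 1 <= Rpower x y.
Proof. intros. rewrite <- (Rpower_1_l y). apply Rle_Rpower_l_neg; auto. Qed.

Lemma Rpower_ge_1 x y : 1 <= x -> 0 <= y -> 1 <= Rpower x y.
Proof. intros. rewrite <- (Rpower_1_l y). apply Rle_Rpower_l; auto; lra. Qed.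

Lemma Rpower_lt_1 x y : 0 < x -> x < 1 -> 0 < y -> Rpower x y < 1.
Proof.
  intros. unfold Rpower. rewrite <- exp_0. apply exp_increasing.
  assert (ln x < 0) by (apply ln_lt_0; auto). nra.
Qed.

Lemma Rpower_le_1_neg x y : 1 <= x -> y <= 0 -> Rpower x y <= 1.
Proof. intros. rewrite <- (Rpower_1_l y). apply Rle_Rpower_l_neg; lra. Qed.

Lemma Rle_Rpower_le_1 x y y' : 0 < x -> x <= 1 -> y' <= y -> Rpower x y <= Rpower x y'.
Proof.
  intros hx hx1 hy. unfold Rpower.
  assert (ln x <= 0) by (rewrite <- ln_1; apply ln_le; lra).
  destruct (Rle_lt_or_eq _ _ (ltac:(nra) : y * ln x <= y' * ln x)) as [h|h];
    [left; apply exp_increasing; auto | right; rewrite h; auto].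
Qed.

Lemma rsum_geom_le r M : 0 <= r < 1 -> rsum M (fun n => r ^ n) <= 1 / (1 - r).
Proof.
  intros hr. assert (h : forall M, rsum M (fun n => r ^ n) * (1 - r) = 1 - r ^ M).
  { induction M0; simpl; [ring|]. rewrite Rmult_plus_distr_r, IHM0. ring. }
  apply (Rmult_le_reg_r (1 - r)); [lra|]. rewrite h.
  unfold Rdiv. rewrite Rmult_1_l, Rinv_l by lra.
  assert (0 <= r ^ M) by (apply pow_le; lra). lra.
Qed.

(* Sums over the scales [theta^n], split into the scales below [a]
   ([ind_lt]) and those above [a] ([ind_le]).  Each is proved by peeling off
   the scale [n = 0] and rescaling [a] to [a / theta]. *)
Section ScaleSums.
Variable th : R.
Hypothesis hth : 0 < th < 1.

Lemma ind_lt_rescale x a : ind_lt (th * x) a = ind_lt x (a / th).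
Proof.
  unfold ind_lt. destruct (Rlt_dec (th * x) a), (Rlt_dec x (a / th)); auto; exfalso.
  - apply n. apply (Rmult_lt_reg_l th); [lra|]. field_simplify; lra.
  - apply n. apply (Rmult_lt_reg_l (/ th)); [apply Rinv_0_lt_compat; lra|].
    replace (/ th * (th * x)) with x by (field; lra). unfold Rdiv in r. lra.
Qed.

Lemma ind_le_rescale x a : ind_le a (th * x) = ind_le (a / th) x.
Proof.
  unfold ind_le. destruct (Rle_dec a (th * x)), (Rle_dec (a / th) x); auto; exfalso.
  - apply n. apply (Rmult_le_reg_l th); [lra|]. field_simplify; lra.
  - apply n. apply (Rmult_le_reg_l (/ th)); [apply Rinv_0_lt_compat; lra|].
    replace (/ th * (th * x)) with x by (field; lra). unfold Rdiv in r. lra.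
Qed.

Lemma rsum_ind_geom_le (ind : R -> R) r M : 0 <= r < 1 -> (forall x, 0 <= ind x <= 1) ->
  rsum M (fun n => ind (th ^ n) * r ^ n) <= 1 / (1 - r).
Proof.
  intros hr hi. eapply Rle_trans; [|apply (rsum_geom_le r M hr)]. apply rsum_le. intros n _.
  destruct (hi (th ^ n)). assert (0 <= r ^ n) by (apply pow_le; lra). nra.
Qed.

Lemma rsum_small_scales_le e : 0 < e -> forall M a, 0 < a ->
  rsum M (fun n => ind_lt (th ^ n) a * Rpower th e ^ n) <= Rpower a e / (1 - Rpower th e).
Proof.
  intros he. set (r := Rpower th e).
  assert (hr : 0 < r < 1) by (split; [apply Rpower_pos | apply Rpower_lt_1; lra]).
  induction M as [|M IH]; intros a ha.
  - simpl. apply Rdiv_le_0_compat; [left; apply Rpower_pos | lra].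
  - destruct (Rlt_dec 1 a) as [h1|h1].
    + assert (hae : 1 <= Rpower a e) by (apply Rpower_ge_1; lra).
      apply Rle_trans with (1 / (1 - r)).
      * apply (rsum_ind_geom_le (fun x => ind_lt x a)); [lra|]. intros; apply ind_lt_01.
      * unfold Rdiv. apply Rmult_le_compat_r; [left; apply Rinv_0_lt_compat; lra | lra].
    + rewrite rsum_shift.
      rewrite (rsum_ext M _ (fun n => r * (ind_lt (th ^ n) (a / th) * r ^ n)))
        by (intros n; simpl; rewrite ind_lt_rescale; ring).
      simpl. unfold ind_lt at 1. destruct (Rlt_dec 1 a); [lra|].
      rewrite rsum_scal_l.
      assert (IH' := IH (a / th) ltac:(apply Rdiv_lt_0_compat; lra)).
      rewrite Rpower_div in IH' by lra.
      apply Rle_trans with (0 * 1 + r * (Rpower a e * Rpower th (- e) / (1 - r))).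
      { apply Rplus_le_compat_l. apply Rmult_le_compat_l; lra. }
      right. unfold r in *. pose proof (Rpower_pos th e). rewrite Rpower_Ropp. field. split; lra.
Qed.

Lemma rsum_large_scales_le e : 0 < e -> forall M a, 0 < a ->
  rsum M (fun n => ind_le a (th ^ n) * Rpower th (- e) ^ n) <=
  Rmax (1 / (1 - Rpower th e) * Rpower a (- e) - Rpower th e / (1 - Rpower th e)) 0.
Proof.
  intros he. set (u := Rpower th e).
  assert (hu : 0 < u < 1) by (split; [apply Rpower_pos | apply Rpower_lt_1; lra]).
  assert (hr : Rpower th (- e) = / u) by (unfold u; apply Rpower_Ropp).
  set (K := 1 / (1 - u)). set (L := u / (1 - u)).
  assert (hK : 0 < K) by (unfold K; apply Rdiv_lt_0_compat; lra).
  assert (hL0 : 0 <= L) by (unfold L; apply Rdiv_le_0_compat; lra).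
  assert (hKL : K - L = 1) by (unfold K, L; field; lra).
  assert (hiu : 1 < / u) by (rewrite <- Rinv_1; apply Rinv_lt_contravar; lra).
  induction M as [|M IH]; intros a ha; [simpl; apply Rmax_r|].
  rewrite rsum_shift.
  rewrite (rsum_ext M _ (fun n => / u * (ind_le (a / th) (th ^ n) * Rpower th (- e) ^ n)))
    by (intros n; simpl; rewrite ind_le_rescale, hr; ring).
  rewrite rsum_scal_l.
  assert (IH' := IH (a / th) ltac:(apply Rdiv_lt_0_compat; lra)).
  rewrite Rpower_div in IH' by lra.
  replace (Rpower th (- - e)) with u in IH' by (unfold u; f_equal; ring).
  set (x := Rpower a (- e)) in *.
  assert (hx : 0 < x) by apply Rpower_pos.
  assert (hIH : / u * Rmax (K * (x * u) - L) 0 <= Rmax (K * x - / u * L) 0).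
  { replace (K * x - / u * L) with (/ u * (K * (x * u) - L)) by (field; lra).
    unfold Rmax. repeat destruct Rle_dec; nra. }
  assert (hstep : rsum M (fun n => ind_le (a / th) (th ^ n) * Rpower th (- e) ^ n) * / u
                  <= Rmax (K * x - / u * L) 0).
  { eapply Rle_trans; [|exact hIH]. rewrite Rmult_comm.
    apply Rmult_le_compat_l; [lra | exact IH']. }
  assert (hL : L * (/ u - 1) = 1) by (unfold L; field; lra).
  simpl. unfold ind_le at 1. rewrite Rmult_comm in hstep.
  destruct (Rle_dec a 1) as [h1|h1].
  - assert (1 <= x) by (apply Rpower_ge_1_neg; lra).
    unfold Rmax in *. repeat destruct Rle_dec; nra.
  - unfold Rmax in *. repeat destruct Rle_dec; nra.
Qed.

Lemma rsum_large_scales_count_le : forall M a, 0 < a ->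
  rsum M (fun n => ind_le a (th ^ n)) <= Rmax (1 - ln a / (- ln th)) 0.
Proof.
  assert (hl : ln th < 0) by (apply ln_lt_0; lra).
  induction M as [|M IH]; intros a ha; [simpl; apply Rmax_r|].
  rewrite rsum_shift.
  rewrite (rsum_ext M _ (fun n => ind_le (a / th) (th ^ n)))
    by (intros n; simpl; rewrite ind_le_rescale; auto).
  assert (IH' := IH (a / th) ltac:(apply Rdiv_lt_0_compat; lra)).
  replace (ln (a / th)) with (ln a + - ln th) in IH'
    by (unfold Rdiv; rewrite ln_mult, ln_Rinv; auto; try apply Rinv_0_lt_compat; lra).
  replace (1 - (ln a + - ln th) / - ln th) with (- ln a / - ln th) in IH' by (field; lra).
  replace (1 - ln a / - ln th) with (1 + - ln a / - ln th) by (field; lra).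
  simpl. unfold ind_le at 1. destruct (Rle_dec a 1) as [h1|h1].
  - assert (ln a <= 0) by (rewrite <- ln_1; apply ln_le; auto).
    assert (0 <= - ln a / - ln th) by (apply Rdiv_le_0_compat; lra).
    unfold Rmax in *. repeat destruct Rle_dec; lra.
  - assert (0 < ln a) by (rewrite <- ln_1; apply ln_increasing; lra).
    assert (- ln a / - ln th < 0)
      by (unfold Rdiv; apply Rmult_neg_pos; [lra | apply Rinv_0_lt_compat; lra]).
    unfold Rmax in *. repeat destruct Rle_dec; lra.
Qed.

End ScaleSums.

(* The majorant [g_a] of the integrand as a function of the quasi-norm [s]
   (up to the factor [2^B]). *)
Definition profile (a B c s : R) : R :=
  if Rle_dec a s then Rpower s (- B) else Rpower a (- B) * Rpower (s / a) (- c).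

Section Profile.
Variables (B c : R).
Hypotheses (hB : 0 < B) (hc : 0 <= c).

Lemma profile_pos a s : 0 < profile a B c s.
Proof.
  unfold profile. destruct Rle_dec; [apply Rpower_pos|].
  apply Rmult_lt_0_compat; apply Rpower_pos.
Qed.

Lemma profile_antitone a s s' : 0 <= a -> 0 < s -> s <= s' ->
  profile a B c s' <= profile a B c s.
Proof.
  intros ha hs hss. unfold profile. destruct (Rle_dec a s'), (Rle_dec a s).
  - apply Rle_Rpower_l_neg; lra.
  - assert (0 < a) by lra.
    assert (Rpower s' (- B) <= Rpower a (- B)) by (apply Rle_Rpower_l_neg; lra).
    assert (1 <= Rpower (s / a) (- c)).
    { apply Rpower_ge_1_neg; [apply Rdiv_lt_0_compat; lra | | lra].
      apply (Rmult_le_reg_r a); [lra|]. field_simplify; lra. }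
    pose proof (Rpower_pos a (- B)). nra.
  - lra.
  - assert (0 < a) by lra. apply Rmult_le_compat_l; [left; apply Rpower_pos|].
    apply Rle_Rpower_l_neg; [apply Rdiv_lt_0_compat; lra | | lra].
    unfold Rdiv. apply Rmult_le_compat_r; [left; apply Rinv_0_lt_compat|]; lra.
Qed.

Lemma profile_rescale_le a s th : 0 <= a -> 0 < s -> 0 < th <= 1 ->
  profile a B c (th * s) <= Rpower th (- (B + c)) * profile a B c s.
Proof.
  intros ha hs hth. unfold profile.
  assert (hc1 : 1 <= Rpower th (- c)) by (apply Rpower_ge_1_neg; lra).
  assert (hB1 : 1 <= Rpower th (- B)) by (apply Rpower_ge_1_neg; lra).
  pose proof (Rpower_pos th (- B)). pose proof (Rpower_pos th (- c)).
  pose proof (Rpower_pos s (- B)). pose proof (Rpower_pos a (- B)).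
  rewrite Ropp_plus_distr, Rpower_plus.
  destruct (Rle_dec a (th * s)), (Rle_dec a s).
  - rewrite <- Rpower_mult_distr by lra.
    assert (0 < Rpower th (- B) * Rpower s (- B)) by (apply Rmult_lt_0_compat; auto). nra.
  - nra.
  - assert (0 < a) by nra.
    replace (th * s / a) with (th * (s / a)) by (field; lra).
    rewrite <- Rpower_mult_distr by (try apply Rdiv_lt_0_compat; lra).
    assert (Rpower a (- B) <= Rpower th (- B) * Rpower s (- B)).
    { rewrite Rpower_mult_distr by lra. apply Rle_Rpower_l_neg; nra. }
    assert (Rpower (s / a) (- c) <= 1).
    { apply Rpower_le_1_neg; [|lra]. apply (Rmult_le_reg_r a); [lra|]. field_simplify; lra. }
    pose proof (Rpower_pos (s / a) (- c)).
    apply Rle_trans with (Rpower a (- B) * Rpower th (- c)); [apply Rmult_le_compat_l; nra | nra].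
  - assert (0 < a) by lra.
    replace (th * s / a) with (th * (s / a)) by (field; lra).
    rewrite <- Rpower_mult_distr by (try apply Rdiv_lt_0_compat; lra).
    assert (0 < Rpower a (- B) * (Rpower th (- c) * Rpower (s / a) (- c))).
    { pose proof (Rpower_pos (s / a) (- c)). apply Rmult_lt_0_compat; nra. }
    nra.
Qed.

End Profile.

Lemma profile_term_split a B c D th n : 0 <= a -> 0 < th ->
  profile a B c (th ^ n) * Rpower (th ^ n) D =
  ind_le a (th ^ n) * Rpower th (D - B) ^ n +
  ind_lt (th ^ n) a * (Rpower a (c - B) * Rpower th (D - c) ^ n).
Proof.
  intros ha hth. assert (hx : 0 < th ^ n) by (apply pow_lt; auto).
  rewrite !Rpower_pow_comm by auto. unfold profile, ind_le, ind_lt.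
  destruct (Rle_dec a (th ^ n)); destruct (Rlt_dec (th ^ n) a); try lra.
  - rewrite <- Rpower_plus. replace (- B + D) with (D - B) by ring. ring.
  - rewrite Rpower_div by lra.
    replace (c - B) with (- B + - - c) by ring. replace (D - c) with (- c + D) by ring.
    rewrite !Rpower_plus. ring.
Qed.

Section ProfileSeries.
Variables (B c D th : R).
Hypotheses (hcD : c < D) (hth : 0 < th < 1).

Definition profile_series (a : R) (M : nat) : R :=
  rsum M (fun n => profile a B c (th ^ n) * Rpower (th ^ n) D).

Lemma Rpower_th_lt_1 e : 0 < e -> 0 < Rpower th e < 1.
Proof. intros. split; [apply Rpower_pos | apply Rpower_lt_1; lra]. Qed.

Lemma profile_series_split a M : 0 <= a ->
  profile_series a M =
  rsum M (fun n => ind_le a (th ^ n) * Rpower th (D - B) ^ n) +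
  rsum M (fun n => ind_lt (th ^ n) a * (Rpower a (c - B) * Rpower th (D - c) ^ n)).
Proof.
  intros ha. unfold profile_series. rewrite <- rsum_plus.
  apply rsum_ext. intros n. apply profile_term_split; lra.
Qed.

Lemma small_scales_le a M : 0 < a ->
  rsum M (fun n => ind_lt (th ^ n) a * (Rpower a (c - B) * Rpower th (D - c) ^ n))
  <= Rpower a (D - B) / (1 - Rpower th (D - c)).
Proof.
  intros ha.
  rewrite (rsum_ext M _ (fun n => Rpower a (c - B) * (ind_lt (th ^ n) a * Rpower th (D - c) ^ n)))
    by (intros; ring).
  rewrite rsum_scal_l. eapply Rle_trans.
  - apply Rmult_le_compat_l; [left; apply Rpower_pos|].
    apply (rsum_small_scales_le th hth (D - c)); lra.
  - right. unfold Rdiv. rewrite <- Rmult_assoc, <- Rpower_plus.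
    replace (c - B + (D - c)) with (D - B) by ring. reflexivity.
Qed.

Lemma small_scales_at_0 M :
  rsum M (fun n => ind_lt (th ^ n) 0 * (Rpower 0 (c - B) * Rpower th (D - c) ^ n)) = 0.
Proof.
  rewrite (rsum_ext M _ (fun _ => 0 * 0)); [rewrite rsum_scal_r; ring|].
  intros n. unfold ind_lt. destruct Rlt_dec; [|ring].
  pose proof (pow_lt th n ltac:(lra)). lra.
Qed.

Lemma profile_series_le_pos a M : 0 < B - D -> 0 < a ->
  profile_series a M <=
  (1 / (1 - Rpower th (B - D)) + 1 / (1 - Rpower th (D - c))) * Rpower a (- (B - D)).
Proof.
  intros hal ha. rewrite profile_series_split by lra.
  pose proof (Rpower_th_lt_1 (B - D) hal). pose proof (Rpower_th_lt_1 (D - c) ltac:(lra)).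
  assert (hlarge := rsum_large_scales_le th hth (B - D) hal M a ha).
  replace (Rpower th (- (B - D))) with (Rpower th (D - B)) in hlarge by (f_equal; ring).
  assert (hsmall := small_scales_le a M ha).
  replace (D - B) with (- (B - D)) in hsmall by ring.
  pose proof (Rpower_pos a (- (B - D))).
  assert (0 <= Rpower th (B - D) / (1 - Rpower th (B - D))) by (apply Rdiv_le_0_compat; lra).
  unfold Rmax in hlarge. destruct Rle_dec; unfold Rdiv in *; nra.
Qed.

Lemma profile_series_le_zero N N0 a M : B = D -> 0 < a <= N -> Rmax 1 (exp 1 * N) <= N0 ->
  profile_series a M <= (1 + 1 / - ln th + 1 / (1 - Rpower th (D - c))) * ln (N0 / a).
Proof.
  intros hBD ha hN0. rewrite profile_series_split by lra.
  pose proof (Rpower_th_lt_1 (D - c) ltac:(lra)).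
  set (lam := - ln th).
  assert (hlam : 0 < lam) by (unfold lam; pose proof (ln_lt_0 th ltac:(lra) ltac:(lra)); lra).
  assert (hN01 : 1 <= N0) by (eapply Rle_trans; [apply Rmax_l | exact hN0]).
  assert (hN0N : exp 1 * N <= N0) by (eapply Rle_trans; [apply Rmax_r | exact hN0]).
  assert (hlnN0 : 0 <= ln N0) by (rewrite <- ln_1; apply ln_le; lra).
  assert (hlnq : ln (N0 / a) = ln N0 - ln a).
  { unfold Rdiv. rewrite ln_mult, ln_Rinv; try lra. apply Rinv_0_lt_compat; lra. }
  assert (hge1 : 1 <= ln (N0 / a)).
  { rewrite <- (ln_exp 1). apply ln_le; [apply exp_pos|].
    apply (Rmult_le_reg_r a); [lra|]. unfold Rdiv. rewrite Rmult_assoc, Rinv_l, Rmult_1_r by lra.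
    pose proof (exp_pos 1). nra. }
  assert (hcount := rsum_large_scales_count_le th hth M a ltac:(lra)). fold lam in hcount.
  rewrite (rsum_ext M _ (fun n => ind_le a (th ^ n)))
    by (intros; rewrite hBD, Rminus_diag, Rpower_O, pow1 by lra; ring).
  assert (hsmall := small_scales_le a M ltac:(lra)).
  replace (D - B) with 0 in hsmall by lra. rewrite Rpower_O in hsmall by lra.
  assert (hR : Rmax (1 - ln a / lam) 0 <= (1 + 1 / lam) * ln (N0 / a)).
  { assert (0 < / lam) by (apply Rinv_0_lt_compat; lra).
    unfold Rmax. destruct Rle_dec; unfold Rdiv in *; [nra | rewrite hlnq; nra]. }
  assert (hsmall' : 1 / (1 - Rpower th (D - c)) <= 1 / (1 - Rpower th (D - c)) * ln (N0 / a)).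
  { assert (0 < 1 / (1 - Rpower th (D - c))) by (apply Rdiv_lt_0_compat; lra). nra. }
  apply Rle_trans with ((1 + 1 / lam) * ln (N0 / a) + 1 / (1 - Rpower th (D - c)) * ln (N0 / a));
    [lra | right; unfold lam; ring].
Qed.

Lemma profile_series_le_neg N a M : B - D < 0 -> 0 <= a <= N ->
  profile_series a M <=
  1 / (1 - Rpower th (D - B)) + Rpower N (D - B) / (1 - Rpower th (D - c)).
Proof.
  intros hal ha. rewrite profile_series_split by lra.
  pose proof (Rpower_th_lt_1 (D - B) ltac:(lra)). pose proof (Rpower_th_lt_1 (D - c) ltac:(lra)).
  apply Rplus_le_compat.
  - apply (rsum_ind_geom_le th (fun x => ind_le a x)); [lra|]. intros; apply ind_le_01.
  - destruct (Req_dec a 0) as [->|ha0].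
    + rewrite small_scales_at_0. apply Rdiv_le_0_compat; [left; apply Rpower_pos | lra].
    + eapply Rle_trans; [apply small_scales_le; lra|].
      unfold Rdiv. apply Rmult_le_compat_r; [left; apply Rinv_0_lt_compat; lra|].
      apply Rle_Rpower_l; lra.
Qed.

Lemma profile_series_le_K N : 0 < N ->
  exists Cs, 0 < Cs /\ exists N1, forall N0, N1 <= N0 -> forall a, 0 <= a <= N ->
  (B - D < 0 \/ 0 < a) -> forall M, profile_series a M <= Cs * Kfun (B - D) N0 a.
Proof.
  intros hN. unfold Kfun.
  pose proof (Rpower_th_lt_1 (D - c) ltac:(lra)).
  assert (0 < 1 / (1 - Rpower th (D - c))) by (apply Rdiv_lt_0_compat; lra).
  destruct (Rlt_dec 0 (B - D)) as [hal|hal]; [|destruct (Req_EM_T (B - D) 0) as [ha0|ha0]].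
  - pose proof (Rpower_th_lt_1 (B - D) hal).
    exists (1 / (1 - Rpower th (B - D)) + 1 / (1 - Rpower th (D - c))). split.
    { assert (0 < 1 / (1 - Rpower th (B - D))) by (apply Rdiv_lt_0_compat; lra). lra. }
    exists 0. intros N0 _ a ha [hor|hor] M; [lra|].
    apply profile_series_le_pos; auto.
  - assert (0 < 1 / - ln th).
    { pose proof (ln_lt_0 th ltac:(lra) ltac:(lra)). apply Rdiv_lt_0_compat; lra. }
    exists (1 + 1 / - ln th + 1 / (1 - Rpower th (D - c))). split; [lra|].
    exists (Rmax 1 (exp 1 * N)). intros N0 hN0 a ha [hor|hor] M; [lra|].
    apply (profile_series_le_zero N); auto; lra.
  - pose proof (Rpower_th_lt_1 (D - B) ltac:(lra)).
    exists (1 / (1 - Rpower th (D - B)) + Rpower N (D - B) / (1 - Rpower th (D - c))). split.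
    { assert (0 < 1 / (1 - Rpower th (D - B))) by (apply Rdiv_lt_0_compat; lra).
      assert (0 < Rpower N (D - B) / (1 - Rpower th (D - c)))
        by (apply Rdiv_lt_0_compat; [apply Rpower_pos | lra]). lra. }
    exists 0. intros N0 _ a ha _ M. rewrite Rmult_1_r.
    apply profile_series_le_neg; lra.
Qed.

End ProfileSeries.

Lemma pw_nonneg x y : 0 <= pw x y.
Proof. unfold pw; destruct Rlt_dec; [left; apply Rpower_pos | lra]. Qed.

Lemma pw_pos x y : 0 < x -> pw x y = Rpower x y.
Proof. intros; unfold pw; destruct Rlt_dec; [auto | lra]. Qed.

Lemma pw_pos_inv x y : 0 < pw x y -> 0 < x.
Proof. unfold pw; destruct Rlt_dec; [auto | lra]. Qed.

Definition quasi_norm (gamma e r : R) : R := pw e (gamma / 4) + pw r (gamma / 2).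

Lemma quasi_norm_pos gamma e r : 0 < e + r -> 0 <= e -> 0 <= r -> 0 < quasi_norm gamma e r.
Proof.
  intros her he hr. unfold quasi_norm.
  pose proof (pw_nonneg e (gamma / 4)). pose proof (pw_nonneg r (gamma / 2)).
  destruct (Rlt_dec 0 e).
  - rewrite (pw_pos e) by auto. pose proof (Rpower_pos e (gamma / 4)). lra.
  - rewrite (pw_pos r) by lra. pose proof (Rpower_pos r (gamma / 2)). lra.
Qed.

(* Each term of the [gammat] quasi-norm is the [2 gammat / gamma]-th power of
   the corresponding term of the [gamma] one. *)
Lemma quasi_norm_half_pow_le gamma gammat e r : 0 < gamma -> 0 < gammat ->
  0 < quasi_norm gamma e r ->
  Rpower (quasi_norm gamma e r / 2) (2 * gammat / gamma) <= pw e (gammat / 2) + pw r gammat.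
Proof.
  intros hg hgt hS. unfold quasi_norm in *. set (P := 2 * gammat / gamma).
  assert (hP : 0 < P) by (unfold P; apply Rdiv_lt_0_compat; lra).
  set (u := pw e (gamma / 4)) in *. set (v := pw r (gamma / 2)) in *.
  assert (0 <= u) by apply pw_nonneg. assert (0 <= v) by apply pw_nonneg.
  assert (0 <= pw e (gammat / 2)) by apply pw_nonneg. assert (0 <= pw r gammat) by apply pw_nonneg.
  destruct (Rle_dec v u) as [huv|huv].
  - assert (he : 0 < e) by (apply (pw_pos_inv e (gamma / 4)); fold u; lra).
    assert (E : pw e (gammat / 2) = Rpower u P).
    { unfold u. rewrite !pw_pos, Rpower_mult by auto. f_equal. unfold P. field. lra. }
    apply Rle_trans with (Rpower u P); [|lra].
    apply Rle_Rpower_l; [lra | split; [apply Rdiv_lt_0_compat|]; lra].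
  - assert (hr : 0 < r) by (apply (pw_pos_inv r (gamma / 2)); fold v; lra).
    assert (E : pw r gammat = Rpower v P).
    { unfold v. rewrite !pw_pos, Rpower_mult by auto. f_equal. unfold P. field. lra. }
    apply Rle_trans with (Rpower v P); [|lra].
    apply Rle_Rpower_l; [lra | split; [apply Rdiv_lt_0_compat|]; lra].
Qed.

Lemma capmin_pos S a : 0 < S -> 0 <= a -> 0 < capmin S a.
Proof.
  intros hS ha. unfold capmin. destruct Req_EM_T; [lra|].
  unfold Rmin. destruct Rle_dec; [apply Rdiv_lt_0_compat | ]; lra.
Qed.

(* Below [a] the cap contributes [(S/a)^(q-B) <= (S/a)^-c]. *)
Lemma weight_le_profile B q a S : 0 < B -> 0 <= a -> 0 < S ->
  Rpower S (- B) * Rpower (capmin S a) q <= profile a B (Rmax (B - q) 0) S.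
Proof.
  intros hB ha hS. unfold capmin, profile.
  destruct (Req_EM_T a 0) as [->|ha0].
  { rewrite Rpower_1_l, Rmult_1_r. destruct Rle_dec; lra. }
  destruct (Rle_dec a S) as [haS|haS].
  - rewrite Rmin_right, Rpower_1_l, Rmult_1_r; [lra|].
    apply (Rmult_le_reg_r a); [lra|]. field_simplify; lra.
  - assert (hSa : 0 < S / a < 1).
    { split; [apply Rdiv_lt_0_compat; lra|].
      apply (Rmult_lt_reg_r a); [lra|]. field_simplify; lra. }
    rewrite Rmin_left by lra.
    replace S with (a * (S / a)) at 1 by (field; lra).
    rewrite <- Rpower_mult_distr, Rmult_assoc, <- Rpower_plus by lra.
    apply Rmult_le_compat_l; [left; apply Rpower_pos|].
    apply Rle_Rpower_le_1; try lra.
    pose proof (Rmax_l (B - q) 0). lra.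
Qed.

Lemma off_diagonal_le_profile gamma gammat b q a e r s0 :
  0 < b -> 0 < gamma -> gamma < gammat -> 0 <= a -> 0 <= e -> 0 <= r -> 0 < e + r ->
  0 < s0 -> s0 <= quasi_norm gamma e r ->
  Rpower (pw e (gammat / 2) + pw r gammat) (- b / 2) * pw (capmin (quasi_norm gamma e r) a) q <=
  Rpower 2 (gammat / gamma * b) *
  profile a (gammat / gamma * b) (Rmax (gammat / gamma * b - q) 0) s0.
Proof.
  intros hb hg hgg ha he hr her hs0 hS.
  set (B := gammat / gamma * b).
  assert (hB : 0 < B) by (unfold B; apply Rmult_lt_0_compat; [apply Rdiv_lt_0_compat|]; lra).
  set (S := quasi_norm gamma e r) in *.
  assert (hSpos : 0 < S) by (apply quasi_norm_pos; auto).
  assert (hX : Rpower (pw e (gammat / 2) + pw r gammat) (- b / 2) <= Rpower 2 B * Rpower S (- B)).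
  { apply Rle_trans with (Rpower (Rpower (S / 2) (2 * gammat / gamma)) (- b / 2)).
    - apply Rle_Rpower_l_neg; [apply Rpower_pos | apply quasi_norm_half_pow_le; auto; lra |].
      unfold Rdiv; nra.
    - rewrite Rpower_mult. replace (2 * gammat / gamma * (- b / 2)) with (- B) by (unfold B; field; lra).
      rewrite Rpower_div by lra. rewrite Ropp_involutive. lra. }
  rewrite (pw_pos (capmin S a)) by (apply capmin_pos; auto).
  assert (hprof := weight_le_profile B q a S hB ha hSpos).
  assert (hanti := profile_antitone B (Rmax (B - q) 0) hB (Rmax_r _ _) a s0 S ha hs0 hS).
  pose proof (Rpower_pos (capmin S a) q). pose proof (Rpower_pos 2 B).
  apply Rle_trans with (Rpower 2 B * Rpower S (- B) * Rpower (capmin S a) q).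
  - apply Rmult_le_compat_r; lra.
  - rewrite Rmult_assoc. apply Rmult_le_compat_l; lra.
Qed.

Lemma dist_k_ge k x y i : (i < k)%nat -> Rabs (x i - y i) <= dist_k k x y.
Proof.
  intros hi. unfold dist_k. rewrite <- sqrt_Rsqr_abs. apply sqrt_le_1_alt.
  unfold Rsqr. replace ((x i - y i) * (x i - y i)) with ((x i - y i) ^ 2) by ring.
  apply (rsum_ge_term k (fun i => (x i - y i) ^ 2)); auto. intros; apply pow2_ge_0.
Qed.

Definition time_gap (z : nat -> R) : R := Rabs (z 0%nat - z 1%nat).
Definition space_gap (k : nat) (z : nat -> R) : R :=
  dist_k k (fun i => z (2 + i)%nat) (fun i => z (2 + k + i)%nat).

Lemma quasi_norm_ge_scale k gamma eps z : 0 < gamma -> 0 < eps ->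
  ~ (time_gap z < eps * eps /\
     forall i, (i < k)%nat -> Rabs (z (2 + i)%nat - z (2 + k + i)%nat) < eps) ->
  Rpower eps (gamma / 2) <= quasi_norm gamma (time_gap z) (space_gap k z).
Proof.
  intros hg heps hout. unfold quasi_norm.
  pose proof (pw_nonneg (time_gap z) (gamma / 4)). pose proof (pw_nonneg (space_gap k z) (gamma / 2)).
  apply not_and_or in hout. destruct hout as [ht|hx].
  - assert (ht' : 0 < time_gap z) by nra.
    rewrite (pw_pos (time_gap z)) by auto.
    replace (Rpower eps (gamma / 2)) with (Rpower (eps * eps) (gamma / 4)).
    + apply Rle_trans with (Rpower (time_gap z) (gamma / 4)); [apply Rle_Rpower_l; nra | lra].
    + rewrite <- Rpower_mult_distr, <- Rpower_plus by auto. f_equal. field.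
  - apply not_all_ex_not in hx. destruct hx as [i hi]. apply imply_to_and in hi.
    destruct hi as [hik hi].
    pose proof (dist_k_ge k (fun i => z (2 + i)%nat) (fun i => z (2 + k + i)%nat) i hik).
    fold (space_gap k z) in *. cbv beta in *.
    rewrite (pw_pos (space_gap k z)) by lra.
    assert (Rpower eps (gamma / 2) <= Rpower (space_gap k z) (gamma / 2))
      by (apply Rle_Rpower_l; lra).
    lra.
Qed.

Section Estimate.
Variables (k d : nat) (t0 t1 : R) (aJ bJ : nat -> R) (b gamma gammat p : R).
Hypotheses (ht01 : t0 < t1) (hJ : forall i, (i < k)%nat -> aJ i < bJ i).
Hypotheses (hb : 0 < b) (hg : 0 < gamma) (hgg : gamma < gammat).

Let B := gammat / gamma * b.
Let c := Rmax (B - p / (2 * INR d)) 0.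
Let D := (4 + 2 * INR k) / gamma.
Let th := Rpower (/ 2) (gamma / 2).

(* The threshold of the [n]-th layer and the cover of its superlevel set. *)
Let lam (a : R) (n : nat) : R := Rpower 2 B * profile a B c (th ^ n).
Let cover (n : nat) : list box := diag_cover k t0 t1 aJ bJ ((/ 2) ^ n) k.

Lemma B_pos : 0 < B.
Proof. unfold B. apply Rmult_lt_0_compat; [apply Rdiv_lt_0_compat|]; lra. Qed.

Lemma th_bounds : 0 < th < 1.
Proof. unfold th. split; [apply Rpower_pos | apply Rpower_lt_1; lra]. Qed.

Lemma th_pow n : th ^ n = Rpower ((/ 2) ^ n) (gamma / 2).
Proof. unfold th. apply Rpower_pow_comm. lra. Qed.

Lemma half_pow_bounds n : 0 < (/ 2) ^ n <= 1.
Proof.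
  split; [apply pow_lt; lra|].
  destruct n; [simpl; lra|]. destruct (pow_lt_1_compat (/ 2) (S n)); [lra | lia | lra].
Qed.

Lemma integrand_le_profile a z s0 : 0 <= a -> 0 < s0 ->
  (0 < time_gap z + space_gap k z -> s0 <= quasi_norm gamma (time_gap z) (space_gap k z)) ->
  integrand k d b gamma gammat p a z <= Rpower 2 B * profile a B c s0.
Proof.
  intros ha hs0 hS. unfold integrand. cbv zeta. fold (time_gap z) (space_gap k z).
  destruct Rlt_dec as [hpos|hpos].
  - apply off_diagonal_le_profile; auto; [apply Rabs_pos | apply sqrt_pos].
  - pose proof (Rpower_pos 2 B). pose proof (profile_pos B c a s0). nra.
Qed.

Lemma lam_incr a n : 0 <= a -> lam a n <= lam a (S n).
Proof.
  intros ha. unfold lam. apply Rmult_le_compat_l; [left; apply Rpower_pos|].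
  pose proof th_bounds. assert (0 < th ^ n) by (apply pow_lt; lra).
  apply profile_antitone; [apply B_pos | apply Rmax_r | exact ha | simpl; nra | simpl; nra].
Qed.

Lemma integrand_le_some_lam a z : 0 <= a -> exists n, integrand k d b gamma gammat p a z <= lam a n.
Proof.
  intros ha. pose proof th_bounds.
  destruct (Rlt_dec 0 (time_gap z + space_gap k z)) as [hpos|hpos].
  - assert (hS : 0 < quasi_norm gamma (time_gap z) (space_gap k z))
      by (apply quasi_norm_pos; auto; [apply Rabs_pos | apply sqrt_pos]).
    destruct (pow_lt_1_zero th ltac:(rewrite Rabs_right; lra) _ hS) as [n hn].
    specialize (hn n (le_n _)). rewrite Rabs_right in hn by (left; apply pow_lt; lra).
    exists n. apply integrand_le_profile; auto; [apply pow_lt; lra | intros; lra].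
  - exists 0%nat. apply integrand_le_profile; auto; [simpl; lra | intros; lra].
Qed.

Lemma superlevel_covered a n z : 0 <= a ->
  in_box (2 + 2 * k) (corner k t0 aJ) (corner k t1 bJ) z ->
  lam a n < integrand k d b gamma gammat p a z ->
  exists Q, In Q (cover n) /\ in_box (2 + 2 * k) (fst Q) (snd Q) z.
Proof.
  intros ha hz hlt. pose proof (half_pow_bounds n) as [heps _].
  destruct (classic (time_gap z < (/ 2) ^ n * (/ 2) ^ n /\
      forall i, (i < k)%nat -> Rabs (z (2 + i)%nat - z (2 + k + i)%nat) < (/ 2) ^ n))
    as [[h1 h2]|hout].
  - exact (diag_cover_covers k t0 t1 aJ bJ _ heps k z (le_n k) hz h1 h2).
  - exfalso. assert (integrand k d b gamma gammat p a z <= lam a n); [|lra].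
    apply integrand_le_profile; auto; [pose proof th_bounds; apply pow_lt; lra|].
    intros _. rewrite th_pow. apply quasi_norm_ge_scale; auto.
Qed.

Let V := box_vol (2 + 2 * k) (corner k t0 aJ) (corner k t1 bJ).
Let Ccov := V * band_factor (t1 - t0) * rprod k (fun i => band_factor (bJ i - aJ i)).

Lemma Ccov_pos : 0 < Ccov.
Proof.
  assert (0 < V) by exact (box_vol_big_box_pos k t0 t1 aJ bJ ht01 hJ).
  apply Rmult_lt_0_compat; [apply Rmult_lt_0_compat; [auto | apply band_factor_pos; lra]|].
  apply rprod_pos. intros i hi. apply band_factor_pos. specialize (hJ i hi). lra.
Qed.

Lemma cover_ok n : Forall (box_ok (2 + 2 * k)) (cover n).
Proof.
  apply Forall_forall. intros Q hQ.
  exact (diag_cover_ok k t0 t1 aJ bJ _ ht01 hJ (proj1 (half_pow_bounds n)) k Q hQ).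
Qed.

Lemma total_vol_cover_le n : total_vol (2 + 2 * k) (cover n) <= Ccov * Rpower (th ^ n) D.
Proof.
  pose proof (half_pow_bounds n) as [heps heps1].
  eapply Rle_trans; [apply total_vol_diag_cover; auto|].
  rewrite rprod_scal, th_pow, Rpower_mult.
  replace (gamma / 2 * D) with (INR (2 + k)) by (unfold D; rewrite plus_INR; simpl; field; lra).
  rewrite Rpower_pow by auto. right. unfold Ccov, V. simpl. ring.
Qed.

Lemma lam_succ_le a n : 0 <= a -> lam a (S n) <= Rpower th (- (B + c)) * lam a n.
Proof.
  intros ha. pose proof th_bounds. unfold lam. simpl.
  assert (0 < th ^ n) by (apply pow_lt; lra).
  pose proof (Rpower_pos 2 B).
  assert (h := profile_rescale_le B c B_pos (Rmax_r _ _) a (th ^ n) th ha ltac:(auto) ltac:(lra)).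
  apply Rmult_le_compat_l with (r := Rpower 2 B) in h; lra.
Qed.

Lemma layer_sum_le_profile_series a M : 0 <= a ->
  lam a 0 * total_vol (2 + 2 * k) ((corner k t0 aJ, corner k t1 bJ) :: nil) +
  rsum M (fun n => lam a (S n) * total_vol (2 + 2 * k) (cover n)) <=
  Rpower 2 B * (V + Rpower th (- (B + c)) * Ccov) *
  (profile_series B c D th a 1 + profile_series B c D th a M).
Proof.
  intros ha. set (Cgrow := Rpower th (- (B + c))).
  assert (0 < Cgrow) by apply Rpower_pos. pose proof (Rpower_pos 2 B). pose proof Ccov_pos.
  assert (0 < V) by exact (box_vol_big_box_pos k t0 t1 aJ bJ ht01 hJ).
  assert (hps : forall M, 0 <= profile_series B c D th a M).
  { intros M'. apply rsum_nonneg. intros n _.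
    pose proof (profile_pos B c a (th ^ n)). pose proof (Rpower_pos (th ^ n) D). nra. }
  assert (hfirst : lam a 0 * total_vol (2 + 2 * k) ((corner k t0 aJ, corner k t1 bJ) :: nil) =
                   Rpower 2 B * V * profile_series B c D th a 1).
  { unfold profile_series, lam, V. simpl. rewrite Rpower_1_l. ring. }
  assert (hrest : rsum M (fun n => lam a (S n) * total_vol (2 + 2 * k) (cover n)) <=
                  Rpower 2 B * Cgrow * Ccov * profile_series B c D th a M).
  { unfold profile_series. rewrite <- rsum_scal_l. apply rsum_le. intros n _.
    assert (0 <= total_vol (2 + 2 * k) (cover n)) by apply total_vol_nonneg, cover_ok.
    assert (0 <= lam a (S n))
      by (apply (lam_nonneg (lam a)); [intros; apply lam_incr | left; apply Rmult_lt_0_compat;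
          [| apply profile_pos]]; auto).
    apply Rle_trans with ((Cgrow * lam a n) * (Ccov * Rpower (th ^ n) D)).
    - apply Rmult_le_compat; auto; [apply lam_succ_le | apply total_vol_cover_le]; auto.
    - right. unfold lam. ring. }
  rewrite hfirst.
  pose proof (hps 1%nat). pose proof (hps M).
  assert (0 <= Rpower 2 B * V * profile_series B c D th a M)
    by (apply Rmult_le_pos; [apply Rmult_le_pos|]; lra).
  assert (0 <= Rpower 2 B * Cgrow * Ccov * profile_series B c D th a 1)
    by (apply Rmult_le_pos; [apply Rmult_le_pos; [apply Rmult_le_pos|]|]; lra).
  nra.
Qed.

Lemma integral_le_profile_series : exists C, 0 < C /\ forall a, 0 <= a ->
  forall l, admissible_step (2 + 2 * k) (corner k t0 aJ) (corner k t1 bJ)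
              (integrand k d b gamma gammat p a) l ->
  exists M, step_sum (2 + 2 * k) l <= C * (profile_series B c D th a 1 + profile_series B c D th a M).
Proof.
  exists (Rpower 2 B * (V + Rpower th (- (B + c)) * Ccov)). split.
  { pose proof (Rpower_pos th (- (B + c))). pose proof (Rpower_pos 2 B). pose proof Ccov_pos.
    assert (0 < V) by exact (box_vol_big_box_pos k t0 t1 aJ bJ ht01 hJ).
    apply Rmult_lt_0_compat; [auto | nra]. }
  intros a ha l hl.
  assert (hlam0 : 0 <= lam a 0) by (left; apply Rmult_lt_0_compat; [apply Rpower_pos | apply profile_pos]).
  assert (hvalues : forall e, In e l -> exists n, step_value e <= lam a n).
  { intros e he. destruct (admissible_step_In (2 + 2 * k) _ _ _ l e hl he) as [hok [_ hval]].
    destruct (integrand_le_some_lam a (fst (step_box e)) ha) as [n hn].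
    exists n. eapply Rle_trans; [apply hval | exact hn].
    intros i hi. specialize (hok i hi). lra. }
  destruct (step_sum_le_layer_cake (lam a) (fun n => lam_incr a n ha) hlam0 (2 + 2 * k) _ _ _ cover
             cover_ok (fun n z hz hlt => superlevel_covered a n z ha hz hlt) l hl
             (big_box_ok k t0 t1 aJ bJ ht01 hJ) hvalues) as [M HM].
  exists M. eapply Rle_trans; [exact HM | apply layer_sum_le_profile_series; auto].
Qed.

End Estimate.

Lemma profile_exponent_lt_D (k d : nat) (b gamma gammat p : R) :
  (1 <= d)%nat -> 0 < gamma ->
  p > 2 * INR d / gamma * (gammat * b - 2 * INR k - 4) ->
  Rmax (gammat / gamma * b - p / (2 * INR d)) 0 < (4 + 2 * INR k) / gamma.
Proof.
  intros hd hg hp.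
  assert (hd0 : 1 <= INR d) by (apply (le_INR 1); lia).
  assert (hD : 0 < (4 + 2 * INR k) / gamma) by (apply Rdiv_lt_0_compat; pose proof (pos_INR k); lra).
  unfold Rmax. destruct Rle_dec; [lra|].
  assert (hq : (gammat * b - 2 * INR k - 4) / gamma < p / (2 * INR d)).
  { apply (Rmult_lt_reg_l (2 * INR d)); [lra|].
    replace (2 * INR d * (p / (2 * INR d))) with p by (field; lra).
    replace (2 * INR d * ((gammat * b - 2 * INR k - 4) / gamma))
      with (2 * INR d / gamma * (gammat * b - 2 * INR k - 4)) by (field; lra).
    lra. }
  replace (gammat / gamma * b) with ((gammat * b - 2 * INR k - 4) / gamma + (4 + 2 * INR k) / gamma)
    by (field; lra).
  lra.
Qed.

Theorem lemma2p3 (T t0 t1 : R) (k : nat) (aJ bJ : nat -> R) (d : nat)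
  (hT : 0 < T) (hI : 0 < t0 /\ t0 < t1 /\ t1 <= T)
  (hJ : forall i, (i < k)%nat -> aJ i < bJ i) (hd : (1 <= d)%nat)
  (N b gamma gammat p : R)
  (hN : 0 < N) (hb : 0 < b) (hg : 0 < gamma) (hgg : gamma < gammat)
  (hp : p > 2 * INR d / gamma * (gammat * b - 2 * INR k - 4)) :
  let alpha := gammat / gamma * b - (4 + 2 * INR k) / gamma in
  exists C : R, 0 < C /\
  exists N1 : R, forall N0 : R, N1 <= N0 ->
  forall a : R, 0 <= a <= N -> (alpha < 0 \/ 0 < a) ->
    integral_le (2 + 2 * k) (corner k t0 aJ) (corner k t1 bJ)
      (integrand k d b gamma gammat p a) (C * Kfun alpha N0 a).
Proof.
  intros alpha. destruct hI as [_ [ht01 _]].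
  set (B := gammat / gamma * b).
  set (c := Rmax (B - p / (2 * INR d)) 0).
  set (D := (4 + 2 * INR k) / gamma).
  set (th := Rpower (/ 2) (gamma / 2)).
  assert (hcD : c < D) by exact (profile_exponent_lt_D k d b gamma gammat p hd hg hp).
  destruct (profile_series_le_K B c D th hcD (th_bounds gamma hg) N hN) as [Cs [hCs [N1 hN1]]].
  destruct (integral_le_profile_series k d t0 t1 aJ bJ b gamma gammat p ht01 hJ hb hg hgg)
    as [C [hC hint]].
  exists (2 * C * Cs). split; [apply Rmult_lt_0_compat; lra|].
  exists N1. intros N0 hN0 a ha hor l hl.
  destruct (hint a (proj1 ha) l hl) as [M hM]. fold B c D th in hM.
  assert (h1 := hN1 N0 hN0 a ha hor 1%nat). assert (hM' := hN1 N0 hN0 a ha hor M).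
  eapply Rle_trans; [exact hM|].
  apply Rle_trans with (C * (Cs * Kfun (B - D) N0 a + Cs * Kfun (B - D) N0 a)).
  - apply Rmult_le_compat_l; lra.
  - right. unfold alpha. fold B D. ring.
Qed.
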